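(* Let $G$ be a looped simple graph and $k$ a positive integer. Then $G$ has a transverse circuit of size $k$ if and only if some looped simple graph locally equivalent to $G$ has a vertex of degree $k-1$.
   Context: A looped simple graph is a finite graph in which each vertex carries at most one loop and no two distinct vertices are joined by more than one edge. ''Adjacent''/''neighbors'' refer only to distinct vertices joined by a non-loop edge; the degree of $v$ is its number of neighbors (loops not counted). $A(G)$ is the $V(G)\times V(G)$ matrix over $GF(2)$ with diagonal entry $1$ exactly at looped vertices and off-diagonal entry $1$ exactly for adjacent pairs. $IAS(G)=(I\mid A(G)\mid A(G)+I)$ over $GF(2)$, rows indexed by $V(G)$; for $v\in V(G)$ the $v$-columns of the three blocks are labelled $\phi_G(v),\chi_G(v),\psi_G(v)$. The isotropic matroid $M[IAS(G)]$ is the binary column matroid of $IAS(G)$ on $W(G)=\{\phi_G(v),\chi_G(v),\psi_G(v):v\in V(G)\}$. The vertex triple of $v$ is $\tau_G(v)=\{\phi_G(v),\chi_G(v),\psi_G(v)\}$. A subtransversal is a subset of $W(G)$ meeting each vertex triple in at most one element; a transverse circuit of $G$ is a circuit of $M[IAS(G)]$ that is a subtransversal. Local equivalence: $G_\ell^v$ is obtained from $G$ by complementing the loop status of $v$; $G_s^v$ by complementing the adjacency status of every pair of distinct neighbors of $v$; $G_{ns}^v$ by doing this and also complementing the loop status of every neighbor of $v$. $H$ is locally equivalent to $G$ if $H$ is obtained from $G$ by a finite sequence of such operations. *)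

From HB Require Import structures.
From mathcomp Require Import all_boot all_order all_algebra.
Set Implicit Arguments. Unset Strict Implicit. Unset Printing Implicit Defensive.
Import GRing.Theory.
Local Open Scope ring_scope.

(* A looped simple graph on a finite vertex type V: a set of looped vertices
   and a set of ordered adjacent pairs (required symmetric and irreflexive). *)
Record lgraph (V : finType) := LGraph { loops : {set V}; edges : {set V * V} }.

Definition adj (V : finType) (G : lgraph V) (x y : V) : bool := (x, y) \in edges G.

Definition looped_simple (V : finType) (G : lgraph V) : Prop :=
  (forall x y, adj G x y = adj G y x) /\ (forall x, ~~ adj G x x).

(* degree: number of neighbours, loops not counted *)
Definition degree (V : finType) (G : lgraph V) (v : V) : nat :=
  #|[set w | adj G v w]|.

Definition op_loop (V : finType) (v : V) (G : lgraph V) : lgraph V :=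
  LGraph [set x | (x \in loops G) (+) (x == v)] (edges G).

Definition op_s (V : finType) (v : V) (G : lgraph V) : lgraph V :=
  LGraph (loops G)
    [set p | (p \in edges G) (+) [&& p.1 != p.2, adj G v p.1 & adj G v p.2]].

Definition op_ns (V : finType) (v : V) (G : lgraph V) : lgraph V :=
  LGraph [set x | (x \in loops G) (+) adj G v x] (edges (op_s v G)).

Definition local_step (V : finType) (G H : lgraph V) : Prop :=
  exists v, H = op_loop v G \/ H = op_s v G \/ H = op_ns v G.

Inductive loc_equiv (V : finType) (G : lgraph V) : lgraph V -> Prop :=
  | le_refl : loc_equiv G G
  | le_step : forall H K, loc_equiv G H -> local_step H K -> loc_equiv G K.

(* Labels of the three blocks of IAS(G): phi (I), chi (A), psi (A+I). *)
Inductive lbl := Phi | Chi | Psi.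
Definition lbl2o (l : lbl) : 'I_3 :=
  match l with Phi => inord 0 | Chi => inord 1 | Psi => inord 2 end.
Definition o2lbl (i : 'I_3) : option lbl :=
  match val i with 0 => Some Phi | 1 => Some Chi | 2 => Some Psi | _ => None end%N.
Lemma lbl2oK : pcancel lbl2o o2lbl.
Proof. by case; rewrite /o2lbl /= inordK. Qed.
HB.instance Definition _ := Finite.copy lbl (pcan_type lbl2oK).

(* W(G) = V x {phi,chi,psi}; (v, Phi) is phi_G(v), etc. *)
Definition W (V : finType) := (V * lbl)%type.

Definition Amx (V : finType) (G : lgraph V) (u v : V) : 'F_2 :=
  if u == v then (v \in loops G)%:R else (adj G u v)%:R.

Definition col (V : finType) (G : lgraph V) (w : W V) (u : V) : 'F_2 :=
  match w.2 with
  | Phi => (u == w.1)%:R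
  | Chi => Amx G u w.1
  | Psi => Amx G u w.1 + (u == w.1)%:R
  end.

Definition dependent (V : finType) (G : lgraph V) (S : {set W V}) : Prop :=
  exists c : W V -> 'F_2,
    (forall w, w \notin S -> c w = 0) /\ (exists w, c w != 0) /\
    (forall u, \sum_(w : W V) c w * col G w u = 0).

Definition circuit (V : finType) (G : lgraph V) (C : {set W V}) : Prop :=
  dependent G C /\ forall D : {set W V}, D \proper C -> ~ dependent G D.

Definition vtriple (V : finType) (v : V) : {set W V} := [set (v, l) | l : lbl].

Definition subtransversal (V : finType) (S : {set W V}) : Prop :=
  forall v : V, (#|S :&: vtriple v| <= 1)%N.

Definition transverse_circuit (V : finType) (G : lgraph V) (C : {set W V}) : Prop :=
  circuit G C /\ subtransversal C.

From Pilot Require Import Defs.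
From mathcomp Require Import all_boot all_order all_algebra.
Set Implicit Arguments. Unset Strict Implicit. Unset Printing Implicit Defensive.
Import GRing.Theory.
Local Open Scope ring_scope.

(* A local operation at v acts on IAS(G) by adding row v to the rows of the
   neighbours of v (none for op_loop), followed by a permutation of the labels
   inside each vertex triple; so it carries transverse circuits to transverse
   circuits of the same size, both ways.  If v has degree k - 1, the column of
   v with zero diagonal entry (chi or psi) together with the phi columns of its
   neighbours is a transverse circuit of size k.  Conversely, in a transverse
   circuit C, pivoting with G_ns^v at a vertex whose element has diagonal
   entry 1 turns that element into a phi element.  Once no such element is
   left, pick a non-phi element at v: either some neighbour y of v has
   phi_G(y) outside C, and G_ns^y fixes C while flipping the loop at v, or C
   contains, hence equals, the neighbourhood circuit of v. *)

Lemma F2_cases (x : 'F_2) : x = 0 \/ x = 1.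
Proof. by case: x => -[|[|//]] ?; [left | right]; apply: val_inj. Qed.

Lemma F2_addxx (x : 'F_2) : x + x = 0.
Proof. by case: (F2_cases x) => ->; [rewrite addr0 | apply: val_inj]. Qed.

Lemma F2_addr_eq0 (x y : 'F_2) : (x + y == 0) = (x == y).
Proof. by case: (F2_cases x) (F2_cases y) => -> [] ->; rewrite ?F2_addxx ?addr0 ?add0r. Qed.

Definition bit (b : bool) : 'F_2 := b%:R.

Lemma bitD a b : bit a + bit b = bit (a (+) b).
Proof. by case: a; case: b; rewrite /bit ?addr0 ?add0r ?F2_addxx. Qed.

Lemma bitM a b : bit a * bit b = bit (a && b).
Proof. by rewrite /bit -natrM mulnb. Qed.

Definition amxb (V : finType) (G : lgraph V) (u x : V) : bool :=
  if u == x then x \in loops G else adj G u x.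

Definition colb (V : finType) (G : lgraph V) (w : W V) (u : V) : bool :=
  match w.2 with
  | Phi => u == w.1
  | Chi => amxb G u w.1
  | Psi => amxb G u w.1 (+) (u == w.1)
  end.

Lemma col_bitE (V : finType) (G : lgraph V) w u : Defs.col G w u = bit (colb G w u).
Proof.
by case: w => x []; rewrite /Defs.col /colb /Amx /amxb /=; case: (u == x); rewrite // -bitD.
Qed.

Definition swap_chi_psi l := match l with Phi => Phi | Chi => Psi | Psi => Chi end.
Definition swap_phi_psi l := match l with Phi => Psi | Chi => Chi | Psi => Phi end.
Definition swap_phi_chi l := match l with Phi => Chi | Chi => Phi | Psi => Psi end.

Definition pivot_swap (V : finType) (G : lgraph V) (v : V) :=
  if v \in loops G then swap_phi_chi else swap_phi_psi.

Definition loop_swap (V : finType) (v x : V) :=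
  if x == v then swap_chi_psi else id.

Definition s_swap (V : finType) (G : lgraph V) (v x : V) :=
  if x == v then pivot_swap G v else if adj G v x then swap_chi_psi else id.

Definition ns_swap (V : finType) (G : lgraph V) (v x : V) :=
  if x == v then pivot_swap G v else id.

Lemma pivot_swapK (V : finType) (G : lgraph V) v : involutive (pivot_swap G v).
Proof. by rewrite /pivot_swap; case: ifP => _ []. Qed.

Lemma loop_swapK (V : finType) (v x : V) : involutive (loop_swap v x).
Proof. by rewrite /loop_swap; case: ifP => _ // []. Qed.

Lemma s_swapK (V : finType) (G : lgraph V) v x : involutive (s_swap G v x).
Proof.
rewrite /s_swap; case: ifP => _; first exact: pivot_swapK.
by case: ifP => _ // [].
Qed.

Lemma ns_swapK (V : finType) (G : lgraph V) v x : involutive (ns_swap G v x).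
Proof. by rewrite /ns_swap; case: ifP => _ //; apply: pivot_swapK. Qed.

Definition relabel (V : finType) (f : V -> lbl -> lbl) (w : W V) : W V :=
  (w.1, f w.1 w.2).

Lemma relabelK (V : finType) (f : V -> lbl -> lbl) :
  (forall x, involutive (f x)) -> involutive (relabel f).
Proof. by move=> fK [x l]; rewrite /relabel /= fK. Qed.

Definition row_op_relabel (V : finType) (G G' : lgraph V) (s : W V -> W V) (v : V)
    (a : V -> 'F_2) : Prop :=
  forall w u, Defs.col G' (s w) u = Defs.col G w u + a u * Defs.col G w v.

Lemma row_op_relabel_colb (V : finType) (G G' : lgraph V) s v (a : V -> bool) :
  (forall w u, colb G' (s w) u = colb G w u (+) (a u && colb G w v)) ->
  row_op_relabel G G' s v (fun u => bit (a u)).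
Proof. by move=> Hb w u; rewrite !col_bitE bitM bitD Hb. Qed.

Lemma row_op_loop (V : finType) (G : lgraph V) v :
  row_op_relabel G (op_loop v G) (relabel (loop_swap v)) v (fun _ => bit false).
Proof.
apply: row_op_relabel_colb => -[x l] u /=; rewrite addbF /colb /amxb /relabel /loop_swap /=.
rewrite /adj /= inE; case: (eqVneq x v) => [->|nxv]; case: l => //=;
  case: (eqVneq u v) => //= _; rewrite ?(negbTE nxv) ?addbF ?addbK //.
Qed.

Ltac case_adj_loops :=
  repeat match goal with
  | |- context [adj ?g ?p ?q] => case: (adj g p q)
  | |- context [?p \in loops ?g] => case: (p \in loops g)
  end.

Lemma row_op_ns (V : finType) (G : lgraph V) v : looped_simple G ->
  row_op_relabel G (op_ns v G) (relabel (ns_swap G v)) v (fun u => bit (adj G v u)).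
Proof.
move=> [sym irr]; apply: row_op_relabel_colb => -[x l] u.
rewrite /colb /amxb /relabel /ns_swap /pivot_swap /adj /= !inE -!/(adj G _ _) /=.
have irr' := negbTE (irr v).
case: (eqVneq x v) => [->|nxv]; case: (eqVneq u v) => [->|nuv].
all: rewrite ?eqxx ?irr' /=; try rewrite (sym u v).
all: case: l => /=; try case: (v \in loops G) => /=.
all: rewrite ?(eq_sym v x) ?(negbTE nxv) /=.
all: try (case: (eqVneq u x) => [->|nux]; rewrite ?eqxx ?(negbTE nux) /=).
all: case_adj_loops; by case: (x \in loops G).
Qed.

Lemma row_op_s (V : finType) (G : lgraph V) v : looped_simple G ->
  row_op_relabel G (op_s v G) (relabel (s_swap G v)) v (fun u => bit (adj G v u)).
Proof.
move=> [sym irr]; apply: row_op_relabel_colb => -[x l] u.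
rewrite /colb /amxb /relabel /s_swap /pivot_swap /adj /= !inE -!/(adj G _ _) /=.
have irr' := negbTE (irr v).
case: (eqVneq x v) => [->|nxv]; case: (eqVneq u v) => [->|nuv].
all: rewrite ?eqxx ?irr' /=; try rewrite (sym u v).
all: try case: (v \in loops G) => /=.
all: rewrite ?(eq_sym v x) ?(negbTE nxv) /=.
all: try (case: (eqVneq u x) => [->|nux]; rewrite ?eqxx ?(negbTE nux) /=).
all: case: (adj G v x) => /=; case: l => /=.
all: case_adj_loops; by case: (x \in loops G).
Qed.

Lemma row_op_relabel_sym (V : finType) (G G' : lgraph V) s v a :
  involutive s -> a v = 0 -> row_op_relabel G G' s v a -> row_op_relabel G' G s v a.
Proof.
move=> sK av sG w u.
have := sG (s w) u; rewrite sK => ->.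
have := sG (s w) v; rewrite sK av mul0r addr0 => <-.
by rewrite -addrA F2_addxx addr0.
Qed.

Lemma dependent_row_op (V : finType) (G G' : lgraph V) s v a :
  involutive s -> row_op_relabel G G' s v a ->
  forall S, dependent G S -> dependent G' (s @: S).
Proof.
move=> sK sG S [c [c0 [[w0 cw0] cdep]]].
exists (c \o s); split; [|split].
- move=> w; rewrite (can_imset_pre _ sK) inE; exact: c0.
- by exists (s w0); rewrite /= sK.
- move=> u; rewrite (reindex_inj (inv_inj sK)) /=.
  under eq_bigr => w _ do rewrite sK sG mulrDr mulrCA.
  by rewrite big_split /= cdep -mulr_sumr cdep mulr0 addr0.
Qed.

Lemma imset_involutive (T : finType) (s : T -> T) (A : {set T}) :
  involutive s -> s @: (s @: A) = A.
Proof. by move=> sK; rewrite -imset_comp (eq_imset _ sK) imset_id. Qed.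

Lemma circuit_row_op (V : finType) (G G' : lgraph V) s v a :
  involutive s -> a v = 0 -> row_op_relabel G G' s v a ->
  forall C, circuit G C -> circuit G' (s @: C).
Proof.
move=> sK av sG C [dC minC]; split; first exact: (dependent_row_op sK sG).
move=> D ltDC dD; apply: (minC (s @: D)).
  by rewrite -(imset_involutive C sK); apply: imset_proper ltDC => ? ? _ _; apply: inv_inj.
exact: (dependent_row_op sK (row_op_relabel_sym sK av sG)).
Qed.

Lemma circuit_sub_eq (V : finType) (G : lgraph V) C D :
  circuit G C -> dependent G D -> D \subset C -> D = C.
Proof.
move=> [_ minC] dD sDC; apply/eqP; rewrite eqEproper sDC /=.
by apply/negP => ltDC; apply: minC ltDC dD.
Qed.

Lemma in_vtriple (V : finType) (v : V) w : (w \in vtriple v) = (w.1 == v).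
Proof. by apply/imsetP/eqP => [[l _ ->] //|<-]; exists w.2; case: w. Qed.

Lemma subtransversal_eq (V : finType) (S : {set W V}) w1 w2 :
  subtransversal S -> w1 \in S -> w2 \in S -> w1.1 = w2.1 -> w1 = w2.
Proof.
move=> trS w1S w2S E; apply: (card_le1_eqP (trS w1.1));
  by rewrite !inE ?w1S ?w2S !in_vtriple ?E eqxx.
Qed.

Lemma card_relabel (V : finType) (f : V -> lbl -> lbl) (S : {set W V}) :
  (forall x, involutive (f x)) -> #|relabel f @: S| = #|S|.
Proof. by move=> fK; apply/card_imset/inv_inj/relabelK. Qed.

Lemma subtransversal_relabel (V : finType) (f : V -> lbl -> lbl) (S : {set W V}) :
  (forall x, involutive (f x)) -> subtransversal S -> subtransversal (relabel f @: S).
Proof.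
move=> fK trS x; apply: leq_trans (trS x).
rewrite -(card_relabel (S :&: vtriple x) fK).
apply/subset_leq_card/subsetP => _ /setIP [/imsetP [w wS ->]].
by rewrite in_vtriple => wx; apply: imset_f; rewrite inE wS in_vtriple.
Qed.

Lemma transverse_circuit_row_op (V : finType) (G G' : lgraph V) f v a :
  (forall x, involutive (f x)) -> a v = 0 -> row_op_relabel G G' (relabel f) v a ->
  forall C, transverse_circuit G C -> transverse_circuit G' (relabel f @: C).
Proof.
move=> fK av fG C [cC trC]; split; last exact: subtransversal_relabel.
exact: circuit_row_op (relabelK fK) av fG C cC.
Qed.

Definition has_tc (V : finType) (G : lgraph V) (k : nat) : Prop :=
  exists C : {set W V}, transverse_circuit G C /\ #|C| = k.

Lemma has_tc_row_op (V : finType) (G G' : lgraph V) f v a :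
  (forall x, involutive (f x)) -> a v = 0 -> row_op_relabel G G' (relabel f) v a ->
  forall k, has_tc G k <-> has_tc G' k.
Proof.
move=> fK av fG k.
have fwd G1 G2 : row_op_relabel G1 G2 (relabel f) v a -> has_tc G1 k -> has_tc G2 k.
  move=> fG12 [C [tC <-]]; exists (relabel f @: C).
  by rewrite card_relabel //; split => //; apply: transverse_circuit_row_op fG12 C tC.
by split; apply: fwd => //; apply: row_op_relabel_sym => //; apply: relabelK.
Qed.

Lemma looped_simple_op_loop (V : finType) (G : lgraph V) v :
  looped_simple G -> looped_simple (op_loop v G).
Proof. by []. Qed.

Lemma looped_simple_op_s (V : finType) (G : lgraph V) v :
  looped_simple G -> looped_simple (op_s v G).
Proof.
move=> [sym irr]; split => [x y|x]; rewrite /adj /= !inE -!/(adj G _ _) /=.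
  by rewrite (sym x y) (eq_sym x y) [adj G v x && _]andbC.
by rewrite eqxx /= (negbTE (irr x)).
Qed.

Lemma looped_simple_op_ns (V : finType) (G : lgraph V) v :
  looped_simple G -> looped_simple (op_ns v G).
Proof. exact: looped_simple_op_s. Qed.

Lemma local_step_has_tc (V : finType) (G H : lgraph V) :
  looped_simple G -> local_step G H ->
  looped_simple H /\ (forall k, has_tc G k <-> has_tc H k).
Proof.
move=> lsG [v [->|[->|->]]].
- split; first exact: looped_simple_op_loop.
  exact: has_tc_row_op (loop_swapK v) _ (row_op_loop G v).
- split; first exact: looped_simple_op_s.
  apply: has_tc_row_op (s_swapK G v) _ (row_op_s v lsG).
  by rewrite (negbTE (lsG.2 v)).
- split; first exact: looped_simple_op_ns.
  apply: has_tc_row_op (ns_swapK G v) _ (row_op_ns v lsG).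
  by rewrite (negbTE (lsG.2 v)).
Qed.

Lemma loc_equiv_has_tc (V : finType) (G H : lgraph V) :
  looped_simple G -> loc_equiv G H ->
  looped_simple H /\ (forall k, has_tc G k <-> has_tc H k).
Proof.
move=> lsG; elim=> [|K L _ [lsK tcGK] stepKL] //.
have [lsL tcKL] := local_step_has_tc lsK stepKL.
by split=> // k; apply: iff_trans (tcGK k) (tcKL k).
Qed.

Lemma loc_equiv_trans (V : finType) (G H K : lgraph V) :
  loc_equiv G H -> loc_equiv H K -> loc_equiv G K.
Proof. by move=> eGH; elim=> // L M _ eGL stepLM; apply: le_step eGL stepLM. Qed.

Lemma sum_colE (V : finType) (G : lgraph V) (c : W V -> 'F_2) u :
  \sum_w c w * Defs.col G w u =
  c (u, Phi) + \sum_(w | w.2 != Phi) c w * Defs.col G w u.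
Proof.
rewrite (bigID (fun w => w.2 == Phi)) /=; congr (_ + _).
rewrite (bigD1 (u, Phi)) //= col_bitE /colb /= eqxx mulr1 big1 ?addr0 //.
move=> [y l] /= /andP [/eqP El ne]; rewrite col_bitE /colb El /=.
by case: (eqVneq u y) ne => [->|]; rewrite ?El ?eqxx ?mulr0.
Qed.

Lemma dependence_phi0 (V : finType) (G : lgraph V) (c : W V -> 'F_2) :
  (forall w, w.2 != Phi -> c w = 0) ->
  (forall u, \sum_w c w * Defs.col G w u = 0) -> forall w, c w = 0.
Proof.
move=> cP cdep [y l]; case: (eqVneq l Phi) => [->|]; last exact: (cP (y, l)).
have := cdep y; rewrite sum_colE big1 ?addr0 // => w /cP ->; exact: mul0r.
Qed.

Definition nonphi (V : finType) (S : {set W V}) : {set W V} :=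
  [set w in S | w.2 != Phi].

Lemma nonphi_dependent (V : finType) (G : lgraph V) S :
  dependent G S -> nonphi S != set0.
Proof.
move=> [c [c0 [[w0 cw0] cdep]]]; apply: contraNneq cw0 => S0.
apply/eqP/(dependence_phi0 _ cdep) => w wP; apply/c0/negP => wS.
by have := in_set0 w; rewrite -S0 inE wS wP.
Qed.

(* The label of v whose IAS column has diagonal entry 0. *)
Definition null_label (V : finType) (G : lgraph V) (v : V) : lbl :=
  if v \in loops G then Psi else Chi.

Lemma null_label_neq_phi (V : finType) (G : lgraph V) v : null_label G v != Phi.
Proof. by rewrite /null_label; case: (v \in loops G); apply/eqP. Qed.

Definition nbhd (V : finType) (G : lgraph V) (v : V) : {set W V} :=
  (v, null_label G v) |: [set (y, Phi) | y in [set y | adj G v y]].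

Section Neighbourhood.
Variables (V : finType) (G : lgraph V) (v : V).
Hypothesis lsG : looped_simple G.
Local Notation l := (null_label G v).
Let nl : l != Phi := null_label_neq_phi G v.

Lemma mem_nbhd_phi u : ((u, Phi) \in nbhd G v) = adj G v u.
Proof.
rewrite !inE xpair_eqE [Phi == l]eq_sym (negbTE nl) andbF /=.
by apply/imsetP/idP => [[y] /[!inE] ay [->] //|au]; exists u; rewrite ?inE.
Qed.

Lemma nbhd_nonphi w : w \in nbhd G v -> w.2 != Phi -> w = (v, l).
Proof. by case/setU1P => [//|/imsetP [y _ ->]]; rewrite eqxx. Qed.

Lemma col_nbhd u : Defs.col G (v, l) u = bit (adj G v u).
Proof.
rewrite col_bitE /colb /amxb /null_label /=; case: (eqVneq u v) => [->|nuv].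
  by rewrite (negbTE (lsG.2 v)); case: (v \in loops G).
by case: (v \in loops G); rewrite /= ?addbF (lsG.1 u v).
Qed.

(* The equation of row y forces c (y, Phi) = c (v, l) for every neighbour y. *)
Lemma nbhd_coef (c : W V -> 'F_2) :
  (forall w, w \notin nbhd G v -> c w = 0) ->
  (forall u, \sum_w c w * Defs.col G w u = 0) ->
  forall w, w \in nbhd G v -> c w = c (v, l).
Proof.
move=> c0 cdep w wN; case: (eqVneq w.2 Phi) => [wP|/(nbhd_nonphi wN) -> //].
have := cdep w.1; rewrite sum_colE (bigD1 (v, l)) //= big1 ?addr0; last first.
  move=> w' /andP [w'P ne]; rewrite c0 ?mul0r //.
  by apply: contra ne => /nbhd_nonphi/(_ w'P) ->.
move: wN; case: w wP => y _ /= ->; rewrite mem_nbhd_phi col_nbhd => ->.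
by rewrite mulr1 => /eqP; rewrite F2_addr_eq0 => /eqP.
Qed.

Lemma nbhd_dependent : dependent G (nbhd G v).
Proof.
exists (fun w => bit (w \in nbhd G v)); split; [|split].
- by move=> w /negbTE ->.
- by exists (v, l); rewrite setU11.
move=> u; rewrite sum_colE (bigD1 (v, l)) //= big1 ?addr0; last first.
  move=> w /andP [wP ne]; suff /negbTE -> : w \notin nbhd G v by rewrite mul0r.
  by apply: contra ne => /nbhd_nonphi/(_ wP) ->.
by rewrite setU11 mul1r mem_nbhd_phi col_nbhd F2_addxx.
Qed.

Lemma nbhd_circuit : circuit G (nbhd G v).
Proof.
split; first exact: nbhd_dependent.
move=> D /properP [sDN [x xN xD]] [c [c0 [[w0 cw0] cdep]]].
have c0N w : w \notin nbhd G v -> c w = 0.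
  by move=> wN; apply/c0/(contra _ wN)/subsetP.
have cvl : c (v, l) != 0.
  apply: contraNneq cw0 => cvl0; apply/eqP/(dependence_phi0 _ cdep) => w wP.
  case: (boolP (w \in nbhd G v)) => [wN|/c0N //].
  by rewrite (nbhd_nonphi wN wP).
by move: cvl; rewrite -(nbhd_coef c0N cdep xN) c0 ?eqxx.
Qed.

Lemma card_nbhd : #|nbhd G v| = (degree G v).+1.
Proof.
rewrite cardsU1 card_imset => [|y z [//]].
suff -> : (v, l) \in [set (y, Phi) | y in [set y | adj G v y]] = false by [].
by apply/imsetP => -[y _ [_ lP]]; move: nl; rewrite lP eqxx.
Qed.

Lemma nbhd_subtransversal : subtransversal (nbhd G v).
Proof.
move=> x; rewrite -(cards1 (x, if x == v then l else Phi)).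
apply/subset_leq_card/subsetP => w /setIP [wN]; rewrite in_vtriple inE => /eqP <-.
case: (eqVneq w.2 Phi) => [wP|/(nbhd_nonphi wN) -> //]; last by rewrite eqxx.
case: w wN wP => y b yN /= bP; rewrite bP mem_nbhd_phi in yN *.
have nyv : y != v by apply: contraTneq yN => ->; apply: lsG.2.
by rewrite (negbTE nyv).
Qed.
End Neighbourhood.

Lemma has_tc_degree (V : finType) (G : lgraph V) v :
  looped_simple G -> has_tc G (degree G v).+1.
Proof.
move=> lsG; exists (nbhd G v); rewrite card_nbhd.
by split=> //; split; [apply: nbhd_circuit | apply: nbhd_subtransversal].
Qed.

Lemma pivot_transverse_circuit (V : finType) (G : lgraph V) C v l :
  looped_simple G -> transverse_circuit G C -> (v, l) \in C -> l != Phi ->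
  l != null_label G v ->
  let C' := relabel (ns_swap G v) @: C in
  [/\ transverse_circuit (op_ns v G) C', #|C'| = #|C| & #|nonphi C'| < #|nonphi C|]%N.
Proof.
move=> lsG tC vlC nl lnull C'.
have fK := ns_swapK G v; have sK := relabelK fK.
have memC' w : (w \in C') = (relabel (ns_swap G v) w \in C).
  by rewrite /C' (can_imset_pre _ sK) inE.
have lPhi : relabel (ns_swap G v) (v, l) = (v, Phi).
  move: nl lnull; rewrite /relabel /ns_swap /pivot_swap /null_label /= eqxx.
  by case: (v \in loops G); case: l {vlC}; rewrite ?eqxx.
split.
- have av : bit (adj G v v) = 0 by rewrite (negbTE (lsG.2 v)).
  exact: (transverse_circuit_row_op fK av (row_op_ns v lsG) tC).
- exact: card_relabel.
have fixC w : w \in C -> w != (v, l) -> relabel (ns_swap G v) w = w.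
  move=> wC; rewrite /relabel /ns_swap; case: (eqVneq w.1 v) => [wv|_]; last by case: w {wC}.
  by rewrite (subtransversal_eq tC.2 wC vlC wv) eqxx.
apply/proper_card/properP; split.
  apply/subsetP => w; rewrite !inE memC' => /andP [wC wP].
  case: (eqVneq (relabel (ns_swap G v) w) (v, l)) => [wvl|nvl].
    by move: wP; rewrite -[w]sK wvl lPhi eqxx.
  have := fixC _ wC nvl; rewrite sK => wE.
  by rewrite -wE in wC; rewrite wC.
exists (v, l); first by rewrite inE vlC.
rewrite inE memC' lPhi negb_and; apply/orP; left; apply/negP => vPC.
by case: (subtransversal_eq tC.2 vlC vPC erefl) nl => ->; rewrite eqxx.
Qed.

Lemma null_label_op_ns (V : finType) (G : lgraph V) y v :
  adj G y v -> null_label (op_ns y G) v != null_label G v.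
Proof.
by rewrite /null_label inE => ->; rewrite addbT; case: (v \in loops G); apply/eqP.
Qed.

Lemma relabel_ns_swap_id (V : finType) (G : lgraph V) y (C : {set W V}) :
  (forall l, (y, l) \in C -> l = null_label G y) -> relabel (ns_swap G y) @: C = C.
Proof.
move=> Cy; rewrite -[RHS]imset_id; apply: eq_in_imset => -[x l] xlC.
rewrite /relabel /ns_swap /=; case: (eqVneq x y) => [xy|//]; subst x.
by rewrite (Cy _ xlC) /pivot_swap /null_label; case: (y \in loops G).
Qed.

(* In the first case C is the neighbourhood circuit of v; in the second, G1 is
   G or G_ns^y for a neighbour y of a vertex carrying a null label. *)
Lemma tc_pivot_or_nbhd (V : finType) (G : lgraph V) C :
  looped_simple G -> transverse_circuit G C ->
  (exists v, degree G v = #|C|.-1) \/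
  exists G1 v l, [/\ loc_equiv G G1, looped_simple G1, transverse_circuit G1 C,
                     (v, l) \in C & (l != Phi) && (l != null_label G1 v)].
Proof.
move=> lsG tC.
case: (boolP [exists w in C, (w.2 != Phi) && (w.2 != null_label G w.1)]).
  case/existsP => -[v l] /andP [vlC lOK]; right; exists G, v, l.
  by split=> //; apply: le_refl.
move/exists_inPn => Cnull.
have Cnull' w : w \in C -> w.2 != Phi -> w.2 = null_label G w.1.
  by move=> wC wP; apply/eqP; move: (Cnull w wC); rewrite wP negbK.
have [v vC] : exists v, (v, null_label G v) \in C.
  have /set0Pn [[v l]] := nonphi_dependent tC.1.1.
  by rewrite inE => /andP [vlC nl]; exists v; rewrite -(Cnull' _ vlC nl).
case: (boolP [exists y, adj G v y && ((y, Phi) \notin C)]).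
  case/existsP => y /andP [vy yC]; right; exists (op_ns y G), v, (null_label G v).
  have fixC : relabel (ns_swap G y) @: C = C.
    apply: relabel_ns_swap_id => l ylC; apply: (Cnull' _ ylC).
    by apply: contraNneq yC => /= <-.
  have av : bit (adj G y y) = 0 by rewrite (negbTE (lsG.2 y)).
  split=> //.
  - by apply: le_step (le_refl G) _; exists y; right; right.
  - exact: looped_simple_op_ns.
  - by rewrite -fixC; apply: transverse_circuit_row_op (ns_swapK G y) av (row_op_ns y lsG) C tC.
  by rewrite null_label_neq_phi eq_sym null_label_op_ns // lsG.1.
move/existsPn => noB; left; exists v.
have sub : nbhd G v \subset C.
  apply/subsetP => w /setU1P [-> //|/imsetP [y]]; rewrite inE => vy ->.
  by move: (noB y); rewrite vy negbK.
by rewrite -(circuit_sub_eq tC.1 (nbhd_dependent v lsG) sub) card_nbhd.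
Qed.

Lemma tc_loc_equiv_degree (V : finType) (G : lgraph V) C :
  looped_simple G -> transverse_circuit G C ->
  exists H, looped_simple H /\ loc_equiv G H /\ exists v, degree H v = #|C|.-1.
Proof.
move: {2}#|nonphi C| (leqnn #|nonphi C|) => n; elim: n G C => [|n IH] G C cn lsG tC.
  by move: (nonphi_dependent tC.1.1); rewrite -card_gt0 ltnNge cn.
case: (tc_pivot_or_nbhd lsG tC) => [[v dv]|[G1 [v [l [eG1 ls1 tC1 vlC /andP [nl lnull]]]]]].
  by exists G; split=> //; split; [apply: le_refl | exists v].
have [tC' cC' ltC'] := pivot_transverse_circuit ls1 tC1 vlC nl lnull.
have [|H [lsH [eH dH]]] := IH _ _ _ (looped_simple_op_ns v ls1) tC'.
  by rewrite -ltnS (leq_trans ltC' cn).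
exists H; split=> //; split; last by rewrite -cC'.
apply: loc_equiv_trans eG1 (loc_equiv_trans _ eH).
by apply: le_step (le_refl G1) _; exists v; right; right.
Qed.

Theorem corollary1p4 (V : finType) (G : lgraph V) (k : nat) :
  looped_simple G -> (0 < k)%N ->
  ((exists C : {set W V}, transverse_circuit G C /\ #|C| = k) <->
   (exists H : lgraph V, looped_simple H /\ loc_equiv G H /\
      exists v : V, degree H v = k.-1)).
Proof.
move=> lsG k_gt0; split.
  by move=> [C [tC <-]]; apply: tc_loc_equiv_degree.
move=> [H [lsH [eGH [v dv]]]]; have [_ tcGH] := loc_equiv_has_tc lsG eGH.
by apply/tcGH; rewrite -(prednK k_gt0) -dv; apply: has_tc_degree.
Qed.
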